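(* Let $\sigma(x)=\mathrm{e}^{-x/2}$ and let $\{p_n\}_{n\ge0}$ be the orthonormal Laguerre polynomials on $(0,\infty)$, i.e. $p_n(x)=\frac{(-1)^n}{n!}\mathrm{e}^x\frac{\mathrm{d}^n}{\mathrm{d}x^n}(x^n\mathrm{e}^{-x})$, which satisfy $\int_0^\infty p_mp_n\mathrm{e}^{-x}\,\mathrm{d}x=\delta_{m,n}$. For $z=\mathrm{e}^{i\theta}$ with $|\theta|<\pi/2$ put $p_{n,z}(x)=z^{1/2}p_n(zx)$ and $N_{n,z}=\int_0^\infty|p_{n,z}(x)\sigma(zx)|^2\,\mathrm{d}x$, where $\sigma(zx)=\mathrm{e}^{-zx/2}$. Then, with $s_\theta=\cos\theta$, \[ N_{n,z}\le s_\theta^{-2n-1}\,2^{4n+2}\quad\text{for all integers } n\ge0. \]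
   Context: $z^{1/2}$ denotes the principal square root. *)

From Stdlib Require Import Reals.
From Coquelicot Require Import Coquelicot.
Open Scope R_scope.

Definition cexp (w : C) : C :=
  (exp (fst w) * cos (snd w), exp (fst w) * sin (snd w)).

(* Principal square root (branch cut on the negative real axis, Re >= 0). *)
Definition csqrt (w : C) : C :=
  (sqrt ((Cmod w + fst w) / 2),
   (if Rlt_dec (snd w) 0 then -1 else 1) * sqrt ((Cmod w - fst w) / 2)).

(* Coefficient of x^k in the orthonormal Laguerre polynomial
   p_n(x) = ((-1)^n/n!) e^x d^n/dx^n (x^n e^{-x}) = sum_k C(n,k) (-x)^k / k!. *)
Definition lag_coef (n k : nat) : R :=
  (-1) ^ k * Binomial.C n k / INR (Factorial.fact k).

Definition lagC (n : nat) (w : C) : C :=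
  sum_n (fun k => Cmult (RtoC (lag_coef n k)) (pow_n w k)) n.

Definition sigmaC (w : C) : C := cexp (Cmult (RtoC (- / 2)) w).

Definition zth (theta : R) : C := (cos theta, sin theta).

Definition pnz (n : nat) (z : C) (x : R) : C :=
  Cmult (csqrt z) (lagC n (Cmult z (RtoC x))).

Definition Nintegrand (n : nat) (z : C) (x : R) : R :=
  (Cmod (Cmult (pnz n z x) (sigmaC (Cmult z (RtoC x))))) ^ 2.

From Stdlib Require Import Reals Lra Lia Factorial Classical_Pred_Type.
From Coquelicot Require Import Coquelicot.
Open Scope R_scope.

(* Since |z^{1/2}| = 1 and |sigma(z x)|^2 = e^{-x cos theta}, the integrand is
   |p_n(z x)|^2 e^{-x cos theta}.  The coefficients of p_n have absolute values
   C(n,k)/k!, so |p_n(w)| <= (1 + 1/a)^n e^{a |w|} for every a > 0; the choice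
   a = cos theta / 3 bounds the integrand by (1 + 3/cos theta)^{2n} e^{-x cos theta / 3},
   whose integral over (0, oo) is (3/cos theta) (1 + 3/cos theta)^{2n}
   <= cos theta^{-2n-1} 4^{2n+1}.  A continuous nonnegative integrand with bounded
   partial integrals has a convergent improper integral. *)

Lemma continuous_pow_n {U : UniformSpace} {K : AbsRing} (g : U -> K) (x : U) (k : nat) :
  continuous g x -> continuous (fun t => pow_n (g t) k) x.
Proof.
  intros Hg. induction k as [|k IH]; simpl.
  - apply continuous_const.
  - apply continuous_mult; assumption.
Qed.

Lemma continuous_sum_n {U : UniformSpace} {K : AbsRing} {V : NormedModule K}
  (f : nat -> U -> V) (x : U) (m : nat) :
  (forall k, continuous (f k) x) -> continuous (fun t => sum_n (fun k => f k t) m) x.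
Proof.
  intros Hf. induction m as [|m IH].
  - apply (continuous_ext (f 0%nat)); [intro t; symmetry; apply sum_O | apply Hf].
  - apply (continuous_ext (fun t => plus (sum_n (fun k => f k t) m) (f (S m) t))).
    + intro t. symmetry. apply sum_Sn.
    + apply continuous_plus; [exact IH | apply Hf].
Qed.

(* The canonical uniform structure of [C] is the product one; the continuity
   lemmas for products and sums are stated for the absolute-value structure. *)
Local Notation C_AbsRing_UniformSpace := (AbsRing_UniformSpace C_AbsRing).

Lemma continuous_RtoC (x : R) :
  @continuous R_UniformSpace C_AbsRing_UniformSpace RtoC x.
Proof.
  intros P [eps HP]. exists eps. intros y Hy. apply HP.
  change (Cmod (Cminus (RtoC y) (RtoC x)) < eps).
  rewrite <- RtoC_minus, Cmod_R. exact Hy.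
Qed.

Lemma nondecreasing_bounded_cvg_p_infty (F : R -> R) (B : R) :
  (forall a b, 0 <= a <= b -> F a <= F b) ->
  (forall b, 0 <= b -> F b <= B) ->
  exists L, filterlim F (Rbar_locally p_infty) (locally L) /\ L <= B.
Proof.
  intros Hmono HB.
  set (E := fun y => exists b, 0 <= b /\ y = F b).
  destruct (completeness E) as [L [HLub HLleast]].
  - exists B. intros y [b [Hb ->]]. apply HB, Hb.
  - exists (F 0). exists 0. split; [lra | reflexivity].
  - exists L. split.
    + intros P [eps HP].
      assert (Hnear : exists b, 0 <= b /\ L - eps < F b).
      { apply not_all_not_ex. intro Hfar.
        assert (L <= L - eps) by
          (apply HLleast; intros y [b [Hb ->]];
           destruct (Rlt_le_dec (L - eps) (F b)); [exfalso; apply (Hfar b) | ]; auto).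
        pose proof (cond_pos eps). lra. }
      destruct Hnear as [b0 [Hb0 Hb0L]].
      exists b0. intros b Hb. apply HP.
      assert (F b0 <= F b) by (apply Hmono; lra).
      assert (F b <= L) by (apply HLub; exists b; split; [lra | reflexivity]).
      change (Rabs (F b - L) < eps). apply Rabs_def1; lra.
    + apply HLleast. intros y [b [Hb ->]]. apply HB, Hb.
Qed.

Lemma is_RInt_gen_nonneg_bounded (f : R -> R) (B : R) :
  (forall x, continuous f x) ->
  (forall x, 0 <= x -> 0 <= f x) ->
  (forall b, 0 <= b -> RInt f 0 b <= B) ->
  exists N, is_RInt_gen f (at_right 0) (Rbar_locally p_infty) N /\ N <= B.
Proof.
  intros Hcont Hpos HB.
  set (F := fun b => RInt f 0 b).
  assert (Hex : forall a b, ex_RInt f a b)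
    by (intros a b; apply (ex_RInt_continuous (V := R_CompleteNormedModule));
        intros; apply Hcont).
  assert (HF' : forall x, is_derive F x (f x)).
  { intro x. apply is_derive_RInt with (a := 0); [|apply Hcont].
    apply filter_forall. intro y. apply RInt_correct, Hex. }
  assert (HDF : forall x, Derive F x = f x) by (intro x; apply is_derive_unique, HF').
  assert (Hmono : forall a b, 0 <= a <= b -> F a <= F b).
  { intros a b Hab. unfold F.
    rewrite <- (RInt_Chasles f 0 a b) by apply Hex.
    assert (0 <= RInt f a b) by (apply RInt_ge_0; [lra | apply Hex | intros; apply Hpos; lra]).
    change (plus (RInt f 0 a) (RInt f a b)) with (RInt f 0 a + RInt f a b). lra. }
  destruct (nondecreasing_bounded_cvg_p_infty F B Hmono HB) as [L [HL HLB]].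
  exists (L - 0). split; [|lra].
  apply (is_RInt_gen_ext (Derive F)).
  { apply filter_forall. intros ab x _. apply HDF. }
  apply is_RInt_gen_Derive.
  - apply filter_forall. intros ab x _. eexists; apply HF'.
  - apply filter_forall. intros ab x _.
    apply (continuous_ext f); [intro; symmetry; apply HDF | apply Hcont].
  - assert (HF0 : F 0 = 0) by (unfold F; rewrite RInt_point; reflexivity).
    assert (HFcont : continuous F 0)
      by (apply (ex_derive_continuous (K := R_AbsRing) (V := R_NormedModule));
          eexists; apply HF').
    unfold continuous in HFcont. rewrite HF0 in HFcont.
    exact (filterlim_filter_le_1 _ (filter_le_within _) HFcont).
  - exact HL.
Qed.

Lemma is_RInt_exp_neg (a b : R) :
  a <> 0 -> is_RInt (fun t => exp (- (a * t))) 0 b ((1 - exp (- (a * b))) / a).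
Proof.
  intros Ha.
  set (G := fun t => - exp (- (a * t)) / a).
  replace ((1 - exp (- (a * b))) / a) with (minus (G b) (G 0)).
  - apply (is_RInt_derive (V := R_CompleteNormedModule)).
    + intros x _. unfold G. auto_derive; [exact I | field; exact Ha].
    + intros x _. apply continuous_exp_comp.
      apply (ex_derive_continuous (K := R_AbsRing) (V := R_NormedModule)). auto_derive; auto.
  - unfold G, minus, plus, opp; simpl. rewrite Rmult_0_r, Ropp_0, exp_0. field. exact Ha.
Qed.

Lemma pow_div_fact_le_exp (y : R) (k : nat) :
  0 <= y -> y ^ k / INR (fact k) <= exp y.
Proof.
  intros Hy.
  assert (Hterm : forall i, 0 <= / INR (fact i) * y ^ i).
  { intro i. apply Rmult_le_pos.
    - left; apply Rinv_0_lt_compat, INR_fact_lt_0.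
    - apply pow_le; exact Hy. }
  assert (Hpartial : sum_f_R0 (fun i => / INR (fact i) * y ^ i) k <= exp y).
  { apply sum_incr; [|exact Hterm].
    unfold exp; destruct (exist_exp y) as [l Hl]; exact Hl. }
  eapply Rle_trans; [|exact Hpartial].
  destruct k as [|k].
  - simpl. lra.
  - rewrite tech5.
    pose proof (cond_pos_sum _ k Hterm).
    unfold Rdiv. rewrite Rmult_comm. lra.
Qed.

Lemma binomial_C_ge_0 (n k : nat) : 0 <= Binomial.C n k.
Proof.
  unfold Binomial.C. apply Rmult_le_pos; [apply pos_INR|].
  left; apply Rinv_0_lt_compat, Rmult_lt_0_compat; apply INR_fact_lt_0.
Qed.

Lemma Cmod_pow_n (w : C) (k : nat) : Cmod (pow_n (K := C_Ring) w k) = Cmod w ^ k.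
Proof.
  induction k as [|k IH]; simpl.
  - apply Cmod_1.
  - change (Cmod (Cmult w (pow_n (K := C_Ring) w k)) = Cmod w * Cmod w ^ k).
    rewrite Cmod_mult, IH. reflexivity.
Qed.

Lemma Cmod_sum_n_le (f : nat -> C) (m : nat) :
  Cmod (sum_n (G := C_AbelianMonoid) f m) <= sum_f_R0 (fun k => Cmod (f k)) m.
Proof.
  induction m as [|m IH].
  - rewrite sum_O. simpl. lra.
  - rewrite sum_Sn, tech5.
    eapply Rle_trans; [apply Cmod_triangle|].
    change (Cmod (sum_n (G := C_AbelianMonoid) f m) + Cmod (f (S m))
      <= sum_f_R0 (fun k => Cmod (f k)) m + Cmod (f (S m))).
    lra.
Qed.

Lemma Cmod_csqrt (w : C) : Cmod (csqrt w) = sqrt (Cmod w).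
Proof.
  pose proof (re_le_Cmod w) as Hre.
  apply Rabs_le_between in Hre; unfold Re in Hre.
  assert (Hsign : forall e : R, e * e = 1 ->
    sqrt ((Cmod w + fst w) / 2) * sqrt ((Cmod w + fst w) / 2)
    + e * sqrt ((Cmod w - fst w) / 2) * (e * sqrt ((Cmod w - fst w) / 2)) = Cmod w).
  { intros e He.
    rewrite !sqrt_sqrt by lra.
    replace (e * sqrt ((Cmod w - fst w) / 2) * (e * sqrt ((Cmod w - fst w) / 2)))
      with (e * e * (sqrt ((Cmod w - fst w) / 2) * sqrt ((Cmod w - fst w) / 2))) by ring.
    rewrite He, sqrt_sqrt by lra. lra. }
  unfold csqrt, Cmod at 1; simpl. rewrite !Rmult_1_r.
  destruct (Rlt_dec (snd w) 0); rewrite Hsign by lra; reflexivity.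
Qed.

Lemma Cmod_zth (t : R) : Cmod (zth t) = 1.
Proof.
  unfold Cmod, zth; simpl.
  rewrite !Rmult_1_r, <- sqrt_1. f_equal.
  pose proof (sin2_cos2 t). unfold Rsqr in *. lra.
Qed.

Lemma Cmod_cexp (w : C) : Cmod (cexp w) = exp (fst w).
Proof.
  unfold Cmod, cexp; simpl.
  transitivity (sqrt (exp (fst w) * exp (fst w))).
  - f_equal. pose proof (sin2_cos2 (snd w)). unfold Rsqr in *. nra.
  - apply sqrt_square. left; apply exp_pos.
Qed.

Lemma Rabs_lag_coef (n k : nat) : Rabs (lag_coef n k) = Binomial.C n k / INR (fact k).
Proof.
  unfold lag_coef, Rdiv.
  rewrite !Rabs_mult, pow_1_abs, Rabs_inv, Rmult_1_l.
  rewrite !Rabs_pos_eq; [reflexivity | apply pos_INR | apply binomial_C_ge_0].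
Qed.

(* Each monomial is traded for a power of [/ a] and a common factor [exp (a |w|)];
   the binomial theorem then sums the powers of [/ a]. *)
Lemma Cmod_lagC_le (n : nat) (a : R) (w : C) :
  0 < a -> Cmod (lagC n w) <= (1 + / a) ^ n * exp (a * Cmod w).
Proof.
  intros Ha. unfold lagC.
  eapply Rle_trans; [apply Cmod_sum_n_le|].
  rewrite Rplus_comm, binomial, Rmult_comm, scal_sum.
  apply sum_Rle. intros k _.
  rewrite Cmod_mult, Cmod_R, Rabs_lag_coef, Cmod_pow_n, pow1, Rmult_1_r.
  assert (Hmono : Cmod w ^ k / INR (fact k) <= (/ a) ^ k * exp (a * Cmod w)).
  { replace (Cmod w ^ k / INR (fact k))
      with ((/ a) ^ k * ((a * Cmod w) ^ k / INR (fact k))).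
    - apply Rmult_le_compat_l; [apply pow_le; left; apply Rinv_0_lt_compat, Ha|].
      apply pow_div_fact_le_exp, Rmult_le_pos; [lra | apply Cmod_ge_0].
    - rewrite Rpow_mult_distr. unfold Rdiv.
      rewrite <- !Rmult_assoc, <- Rpow_mult_distr, Rinv_l, pow1 by lra. ring. }
  pose proof (binomial_C_ge_0 n k).
  replace (Binomial.C n k / INR (fact k) * Cmod w ^ k)
    with (Binomial.C n k * (Cmod w ^ k / INR (fact k))) by (unfold Rdiv; ring).
  rewrite Rmult_assoc.
  apply Rmult_le_compat_l; assumption.
Qed.

Lemma continuous_Cmod_lagC_line (n : nat) (z : C) (x : R) :
  continuous (fun t => Cmod (lagC n (Cmult z (RtoC t)))) x.
Proof.
  assert (Hline : @continuous R_UniformSpace C_AbsRing_UniformSpace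
                    (fun t => Cmult z (RtoC t)) x).
  { apply (@continuous_mult R_UniformSpace C_AbsRing (fun _ => z) RtoC).
    - apply continuous_const.
    - apply continuous_RtoC. }
  apply (@continuous_comp R_UniformSpace C_AbsRing_UniformSpace R_UniformSpace _ Cmod).
  - unfold lagC.
    apply (@continuous_sum_n R_UniformSpace C_AbsRing (AbsRing_NormedModule C_AbsRing)).
    intro k. apply (@continuous_mult R_UniformSpace C_AbsRing).
    + apply continuous_const.
    + apply (@continuous_pow_n R_UniformSpace C_AbsRing), Hline.
  - exact (@filterlim_norm C_AbsRing (AbsRing_NormedModule C_AbsRing) _).
Qed.

Lemma Nintegrand_zth (n : nat) (t x : R) :
  Nintegrand n (zth t) x
  = Cmod (lagC n (Cmult (zth t) (RtoC x))) ^ 2 * exp (- (cos t * x)).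
Proof.
  unfold Nintegrand, pnz, sigmaC.
  rewrite !Cmod_mult, Cmod_csqrt, Cmod_zth, sqrt_1, Cmod_cexp.
  replace (exp (- (cos t * x)))
    with (exp (fst (Cmult (RtoC (- / 2)) (Cmult (zth t) (RtoC x)))) ^ 2).
  - ring.
  - simpl. rewrite Rmult_1_r, <- exp_plus. f_equal. unfold zth; simpl. field.
Qed.

Lemma continuous_Nintegrand_zth (n : nat) (t x : R) :
  continuous (Nintegrand n (zth t)) x.
Proof.
  apply (continuous_ext
           (fun s => Cmod (lagC n (Cmult (zth t) (RtoC s))) ^ 2 * exp (- (cos t * s)))).
  { intro s. symmetry. apply Nintegrand_zth. }
  apply (continuous_mult (K := R_AbsRing)).
  - apply (continuous_comp _ (fun y => y ^ 2)).
    + apply continuous_Cmod_lagC_line.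
    + apply (ex_derive_continuous (K := R_AbsRing) (V := R_NormedModule)). auto_derive; auto.
  - apply continuous_exp_comp.
    apply (ex_derive_continuous (K := R_AbsRing) (V := R_NormedModule)). auto_derive; auto.
Qed.

Lemma Nintegrand_zth_le (n : nat) (t x : R) :
  0 < cos t -> 0 <= x ->
  Nintegrand n (zth t) x <= (1 + 3 / cos t) ^ (2 * n) * exp (- (cos t / 3 * x)).
Proof.
  intros Hc Hx. rewrite Nintegrand_zth.
  set (c := cos t) in *.
  pose proof (Cmod_lagC_le n (c / 3) (Cmult (zth t) (RtoC x)) ltac:(lra)) as Hlag.
  rewrite Cmod_mult, Cmod_zth, Cmod_R, Rabs_pos_eq, Rmult_1_l in Hlag by exact Hx.
  replace (/ (c / 3)) with (3 / c) in Hlag by (field; lra).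
  assert (Hsq : Cmod (lagC n (Cmult (zth t) (RtoC x))) ^ 2
                <= ((1 + 3 / c) ^ n * exp (c / 3 * x)) ^ 2)
    by (apply pow_incr; split; [apply Cmod_ge_0 | exact Hlag]).
  eapply Rle_trans; [apply Rmult_le_compat_r; [left; apply exp_pos | exact Hsq]|].
  right. rewrite Rpow_mult_distr, <- pow_mult, Rmult_assoc, Nat.mul_comm. f_equal.
  simpl. rewrite Rmult_1_r, <- !exp_plus. f_equal. field.
Qed.

Lemma RInt_Nintegrand_zth_le (n : nat) (t b : R) :
  0 < cos t -> 0 <= b ->
  RInt (Nintegrand n (zth t)) 0 b <= 3 / cos t * (1 + 3 / cos t) ^ (2 * n).
Proof.
  intros Hc Hb. set (c := cos t) in *.
  set (A := (1 + 3 / c) ^ (2 * n)).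
  assert (HA : 0 <= A)
    by (apply pow_le; pose proof (Rdiv_lt_0_compat 3 c ltac:(lra) Hc); lra).
  pose proof (is_RInt_scal _ 0 b A _ (is_RInt_exp_neg (c / 3) b ltac:(lra))) as Hmajorant.
  apply Rle_trans with (A * ((1 - exp (- (c / 3 * b))) / (c / 3))).
  - apply (is_RInt_le (Nintegrand n (zth t)) (fun x => A * exp (- (c / 3 * x))) 0 b _ _ Hb);
      [|exact Hmajorant|].
    + apply (RInt_correct (V := R_CompleteNormedModule)),
            (ex_RInt_continuous (V := R_CompleteNormedModule)).
      intros; apply continuous_Nintegrand_zth.
    + intros x Hx. apply Nintegrand_zth_le; [exact Hc | lra].
  - pose proof (exp_pos (- (c / 3 * b))).
    replace (3 / c * A) with (A * (1 / (c / 3))) by (field; lra).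
    apply Rmult_le_compat_l; [exact HA|].
    apply Rmult_le_compat_r; [left; apply Rinv_0_lt_compat; lra | lra].
Qed.

Lemma three_div_mul_pow_le (c : R) (n : nat) :
  0 < c <= 1 -> 3 / c * (1 + 3 / c) ^ (2 * n) <= / c ^ (2 * n + 1) * 2 ^ (4 * n + 2).
Proof.
  intros Hc.
  assert (H3c : 0 < 3 / c) by (apply Rdiv_lt_0_compat; lra).
  assert (H4c : 1 + 3 / c <= 4 / c)
    by (apply Rmult_le_reg_l with c; [lra | field_simplify; lra]).
  replace (/ c ^ (2 * n + 1) * 2 ^ (4 * n + 2)) with ((4 / c) ^ (2 * n + 1)).
  - rewrite pow_add, pow_1, Rmult_comm.
    apply Rmult_le_compat; [apply pow_le; lra | lra | | lra].
    apply pow_incr; lra.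
  - replace (4 * n + 2)%nat with (2 * (2 * n + 1))%nat by lia.
    rewrite pow_mult, <- pow_inv, <- Rpow_mult_distr.
    f_equal. unfold Rdiv. ring.
Qed.

Theorem theorem3 (theta : R) (n : nat) :
  Rabs theta < PI / 2 ->
  exists N : R,
    is_RInt_gen (Nintegrand n (zth theta)) (at_right 0) (Rbar_locally p_infty) N /\
    N <= / (cos theta ^ (2 * n + 1)) * 2 ^ (4 * n + 2).
Proof.
  intros Htheta.
  assert (Hc : 0 < cos theta) by (apply cos_gt_0; apply Rabs_def2 in Htheta; lra).
  assert (Hc1 : cos theta <= 1) by apply COS_bound.
  destruct (is_RInt_gen_nonneg_bounded (Nintegrand n (zth theta))
              (3 / cos theta * (1 + 3 / cos theta) ^ (2 * n))) as [N [HN HNB]].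
  - apply continuous_Nintegrand_zth.
  - intros x _. rewrite Nintegrand_zth.
    apply Rmult_le_pos; [apply pow2_ge_0 | left; apply exp_pos].
  - intros b Hb. apply RInt_Nintegrand_zth_le; assumption.
  - exists N. split; [exact HN|].
    eapply Rle_trans; [exact HNB | apply three_div_mul_pow_le; lra].
Qed.
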